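(* Let $u:2^{[n]} \rightarrow \mathbb{R}_{\geq 0}$ be a (monotone, normalized) submodular and second-order supermodular set function and let $c:2^{[n]} \rightarrow \mathbb{R}_{\geq 0}$ be a modular set function with positive item costs. If the local search algorithm converges before terminating, i.e., it reaches a permutation $\pi$ such that no neighbor of $\pi$ (a permutation obtained by removing the element in some position $i$ of $\pi$ and reinserting it in some position $j$) has strictly smaller objective value, then the permutation it returns is a $4$-approximation to Min-Sum Submodular Cover on $u$ and $c$.
   Context: Min-Sum Submodular Cover: given a positive integer $n$, a monotone submodular utility function $u:2^{[n]} \rightarrow \mathbb{R}_{\geq 0}$ with $u(\emptyset)=0$, and positive costs $c_1,\ldots,c_n$ defining the modular cost function $c(S)=\sum_{i\in S} c_i$, find a permutation of $[n]$ minimizing $\sum_{i=1}^{n} c(S_i)\,(u(S_i)-u(S_{i-1}))$, where $S_i$ is the set of the first $i$ elements of the permutation (and $S_0=\emptyset$). Notation: $f(e|S) := f(S\cup\{e\})-f(S)$. The function $u$ is submodular if $u(i|S) \geq u(i|S\cup\{j\})$, and second-order supermodular if $u(i|S) - u(i|S \cup \{j\}) \geq u(i|S \cup \{k\}) - u(i|S \cup \{k,j\})$, for all $S\subseteq[n]$ and $i,j,k \in [n]\setminus S$. The local search algorithm: given $\epsilon>0$ and an initial $d$-approximate permutation $\pi$, repeat for up to $2n^3\log(d/\epsilon)$ iterations: among all neighbors $\pi'$ of $\pi$ (obtained by moving the element in position $i$ to position $j$, for $i,j\in[n]$), find one with lowest objective value; if its objective value is strictly less than that of $\pi$, replace $\pi$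 by it; otherwise the algorithm has converged and returns $\pi$. If the iteration budget is exhausted, it returns the current $\pi$. *)

From HB Require Import structures.
From mathcomp Require Import all_boot all_order all_algebra.
Set Implicit Arguments. Unset Strict Implicit. Unset Printing Implicit Defensive.
Import Order.TTheory GRing.Theory Num.Theory.
Local Open Scope ring_scope.

Section MSSC.
Variables (R : realFieldType) (n : nat).

Definition marg (f : {set 'I_n} -> R) (e : 'I_n) (S : {set 'I_n}) : R :=
  f (e |: S) - f S.

Definition normalized (u : {set 'I_n} -> R) : Prop := u set0 = 0.

Definition nonneg_fun (u : {set 'I_n} -> R) : Prop := forall S, 0 <= u S.

Definition monotone (u : {set 'I_n} -> R) : Prop :=
  forall S T : {set 'I_n}, S \subset T -> u S <= u T.

Definition submodular (u : {set 'I_n} -> R) : Prop :=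
  forall (S : {set 'I_n}) (i j : 'I_n), i \notin S -> j \notin S ->
    marg u i (j |: S) <= marg u i S.

Definition second_order_supermodular (u : {set 'I_n} -> R) : Prop :=
  forall (S : {set 'I_n}) (i j k : 'I_n), i \notin S -> j \notin S -> k \notin S ->
    marg u i (k |: S) - marg u i (k |: (j |: S)) <= marg u i S - marg u i (j |: S).

Definition cost (c : 'I_n -> R) (S : {set 'I_n}) : R := \sum_(i in S) c i.

(* A permutation of [n] is represented as the sequence of its elements in
   order: s is a permutation iff perm_eq s (enum 'I_n). *)
Definition is_perm_seq (s : seq 'I_n) : bool := perm_eq s (enum 'I_n).

Definition prefix (s : seq 'I_n) (k : nat) : {set 'I_n} := [set x in take k s].

Definition mssc_obj (u : {set 'I_n} -> R) (c : 'I_n -> R) (s : seq 'I_n) : R :=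
  \sum_(k < size s) cost c (prefix s k.+1) * (u (prefix s k.+1) - u (prefix s k)).

(* neighbor: remove the element at (0-based) position i, reinsert it so that
   it ends up at (0-based) position j *)
Definition move_elt (i j : nat) (s : seq 'I_n) : seq 'I_n :=
  let t := take i s ++ drop i.+1 s in
  take j t ++ take 1 (drop i s) ++ drop j t.

Definition local_opt (u : {set 'I_n} -> R) (c : 'I_n -> R) (s : seq 'I_n) : Prop :=
  forall i j : 'I_n, ~ (mssc_obj u c (move_elt i j s) < mssc_obj u c s).

End MSSC.

From HB Require Import structures.
From mathcomp Require Import all_boot all_order all_algebra.
From mathcomp Require Import ring lra zify.
Import Order.TTheory GRing.Theory Num.Theory.
Local Open Scope ring_scope.
Set Implicit Arguments. Unset Strict Implicit. Unset Printing Implicit Defensive.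

(* By Abel summation the objective of a permutation s is the residual sum
   \sum_k c(s_k) (u([n]) - u(s_<k)).  Moving pi_i forward to position j <= i does
   not help, so \sum_(j <= k <= i) c(pi_k) u(pi_i | pi_<k) <= c(pi_i) r(j), where
   r(k) = u([n]) - u(pi_<k) is the residual of pi.  Submodularity bounds r(k) by the
   residual r'(L) of sigma after L steps plus \sum_(q < L) u(sigma_q | pi_<k);
   choosing the least L = L(k) with 2 r'(L) <= r(k) gives
   r(k) <= 2 \sum_(q < L(k)) u(sigma_q | pi_<k).  Exchanging the sums, sigma_q is
   charged by the positions k with q < L(k) up to its own position in pi; as L is
   monotone these form an interval [kappa, pos q], so the local bound charges it at
   most c(sigma_q) r(kappa) < 2 c(sigma_q) r'(q).  Hence the factor 4. *)

Lemma abel_summation (R : comPzRingType) (a f : nat -> R) N :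
  \sum_(k < N) (\sum_(j < k.+1) a j) * (f k.+1 - f k) =
  \sum_(j < N) a j * (f N - f j).
Proof.
elim: N => [|N IH]; first by rewrite !big_ord0.
rewrite big_ord_recr /= IH [RHS]big_ord_recr /= [\sum_(j < N.+1) a j]big_ord_recr /=.
rewrite mulrDl addrA big_distrl -big_split /=; congr (_ + _).
by apply: eq_bigr => j _; ring.
Qed.

Lemma drop_catl (T : Type) j (s1 s2 : seq T) :
  (j <= size s1)%N -> drop j (s1 ++ s2) = drop j s1 ++ s2.
Proof.
rewrite drop_cat leq_eqVlt => /orP[/eqP ->|->] //.
by rewrite ltnn subnn drop0 drop_size.
Qed.

Lemma split_at_nth (T : Type) (x0 : T) (s : seq T) i j :
  (j <= i)%N -> (i < size s)%N ->
  s = take j s ++ drop j (take i s) ++ nth x0 s i :: drop i.+1 s.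
Proof.
move=> le_ji lt_i.
by rewrite -(drop_nth x0 lt_i) catA -{1}(take_takel s le_ji) !cat_take_drop.
Qed.

Section SetOfSeq.
Variable T : finType.

Lemma set_seq0 : [set x in [::]] = set0 :> {set T}.
Proof. by apply/setP => x; rewrite !inE. Qed.

Lemma set_seq_cons (y : T) s : [set x in y :: s] = y |: [set x in s].
Proof. by apply/setP => x; rewrite !inE. Qed.

Lemma set_seq_cat (s1 s2 : seq T) :
  [set x in s1 ++ s2] = [set x in s1] :|: [set x in s2].
Proof. by apply/setP => x; rewrite !inE mem_cat. Qed.

End SetOfSeq.

Lemma perm_seq_uniq n (s : seq 'I_n) : is_perm_seq s -> uniq s.
Proof. by move=> hs; rewrite (perm_uniq hs) enum_uniq. Qed.

Lemma size_perm_seq n (s : seq 'I_n) : is_perm_seq s -> size s = n.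
Proof. by move=> hs; rewrite (perm_size hs) size_enum_ord. Qed.

Lemma perm_seq_mem n (s : seq 'I_n) x : is_perm_seq s -> x \in s.
Proof. by move=> hs; rewrite (perm_mem hs) mem_enum. Qed.

Lemma prefix_full n (s : seq 'I_n) k : is_perm_seq s -> (n <= k)%N -> prefix s k = setT.
Proof.
move=> hs le_nk; apply/setP => x.
by rewrite !inE take_oversize ?perm_seq_mem ?size_perm_seq.
Qed.

Lemma prefix_subset n (s : seq 'I_n) k k' : (k <= k')%N -> prefix s k \subset prefix s k'.
Proof.
by move=> lekk'; apply/subsetP => y; rewrite !inE -(subnKC lekk') takeD mem_cat => ->.
Qed.

Lemma prefix_addn n (s : seq 'I_n) j k :
  prefix s (j + k) = prefix s j :|: [set x in take k (drop j s)].
Proof. by rewrite /prefix takeD set_seq_cat. Qed.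

Lemma prefixS n (x0 : 'I_n) (s : seq 'I_n) k :
  (k < size s)%N -> prefix s k.+1 = nth x0 s k |: prefix s k.
Proof.
move=> lt_k; rewrite /prefix (take_nth x0 lt_k) -cats1 set_seq_cat setUC.
by rewrite set_seq_cons set_seq0 setU0.
Qed.

Lemma move_eltE n (x0 : 'I_n) (s : seq 'I_n) i j :
  (j <= i)%N -> (i < size s)%N ->
  move_elt i j s = take j s ++ nth x0 s i :: drop j (take i s) ++ drop i.+1 s.
Proof.
move=> le_ji lt_i; have size_take_i : size (take i s) = i by rewrite size_takel // ltnW.
rewrite /move_elt (drop_nth x0 lt_i) /= take0.
by rewrite takel_cat ?size_take_i // take_takel // drop_catl ?size_take_i.
Qed.

Section SubmodularFacts.
Variables (R : realFieldType) (n : nat) (u : {set 'I_n} -> R).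
Hypotheses (u_mono : monotone u) (u_sub : submodular u).

Implicit Types (e j : 'I_n) (S B : {set 'I_n}) (t : seq 'I_n).

Lemma marg_ge0 e S : 0 <= marg u e S.
Proof. by rewrite subr_ge0; apply/u_mono/subsetUr. Qed.

Lemma marg_in e S : e \in S -> marg u e S = 0.
Proof. by move=> eS; rewrite /marg (setUidPr _) ?subrr // sub1set. Qed.

Lemma marg_setU1_le e j S : marg u e (j |: S) <= marg u e S.
Proof.
have [ejS|ejS] := boolP (e \in j |: S); first by rewrite marg_in ?marg_ge0.
have [jS|jS] := boolP (j \in S); first by rewrite (setUidPr _) ?sub1set.
by apply: u_sub jS; apply: contra ejS; rewrite inE => ->; rewrite orbT.
Qed.

Lemma marg_setU_le e S B : marg u e (S :|: B) <= marg u e S.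
Proof.
rewrite -(set_enum B); elim: (enum B) => [|j s IH].
  by rewrite set_seq0 setU0.
by rewrite set_seq_cons setUCA; apply: le_trans (marg_setU1_le _ _ _) IH.
Qed.

Lemma gain_le_sum_marg S t : u (S :|: [set x in t]) - u S <= \sum_(x <- t) marg u x S.
Proof.
elim: t => [|j t IH].
  by rewrite big_nil set_seq0 setU0 subrr.
rewrite big_cons set_seq_cons.
have := marg_setU_le j S [set x in t]; rewrite setUCA /marg in IH *; lra.
Qed.

Lemma le_sum_marg S t : u [set x in t] <= u S + \sum_(x <- t) marg u x S.
Proof. have := gain_le_sum_marg S t; have := u_mono (subsetUr S [set x in t]); lra. Qed.

End SubmodularFacts.

Section Objective.
Variables (R : realFieldType) (n : nat) (u : {set 'I_n} -> R) (c : 'I_n -> R).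
Implicit Types (e : 'I_n) (A : {set 'I_n}) (s : seq 'I_n) (U : R).

Lemma cost_prefix x0 s k :
  uniq s -> (k <= size s)%N -> cost c (prefix s k) = \sum_(j < k) c (nth x0 s j).
Proof.
move=> us le_ks; rewrite /cost /prefix (eq_bigl (mem (take k s))) => [|x]; last by rewrite inE.
rewrite -big_uniq ?take_uniq // (big_nth x0) size_takel // big_mkord.
by apply: eq_bigr => j _; rewrite nth_take.
Qed.

Lemma mssc_obj_residual x0 s : is_perm_seq s ->
  mssc_obj u c s = \sum_(k < size s) c (nth x0 s k) * (u setT - u (prefix s k)).
Proof.
move=> hs; have full : prefix s (size s) = setT by rewrite prefix_full ?size_perm_seq.
have := abel_summation (fun j => c (nth x0 s j)) (fun k => u (prefix s k)) (size s).
rewrite /= full => <-.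
by apply: eq_bigr => k _; rewrite (cost_prefix x0) ?perm_seq_uniq.
Qed.

Fixpoint resid_obj U A s : R :=
  if s is x :: s' then c x * (U - u A) + resid_obj U (x |: A) s' else 0.

Lemma resid_obj_cat U A s1 s2 :
  resid_obj U A (s1 ++ s2) = resid_obj U A s1 + resid_obj U (A :|: [set x in s1]) s2.
Proof.
elim: s1 A => [|x s1 IH] A /=; first by rewrite set_seq0 setU0 add0r.
by rewrite IH addrA set_seq_cons setUCA setUA.
Qed.

Lemma resid_obj_nth x0 U A s :
  resid_obj U A s = \sum_(k < size s) c (nth x0 s k) * (U - u (A :|: [set x in take k s])).
Proof.
elim: s A => [|x s IH] A /=; first by rewrite big_ord0.
rewrite big_ord_recl /= IH set_seq0 setU0; congr (_ + _); apply: eq_bigr => k _.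
by rewrite set_seq_cons setUCA setUA.
Qed.

Lemma mssc_obj_resid_obj (x0 : 'I_n) s :
  is_perm_seq s -> mssc_obj u c s = resid_obj (u setT) set0 s.
Proof.
move=> hs; rewrite (mssc_obj_residual x0 hs) (resid_obj_nth x0).
by apply: eq_bigr => k _; rewrite set0U.
Qed.

Lemma resid_obj_setU1 x0 U A e s :
  resid_obj U A s - resid_obj U (e |: A) s =
  \sum_(k < size s) c (nth x0 s k) * marg u e (A :|: [set x in take k s]).
Proof.
rewrite !(resid_obj_nth x0) -sumrB; apply: eq_bigr => k _.
by rewrite /marg -setUA; ring.
Qed.

Lemma resid_obj_move_front U s1 s2 e s3 :
  resid_obj U set0 (s1 ++ s2 ++ e :: s3) <= resid_obj U set0 (s1 ++ e :: s2 ++ s3) ->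
  resid_obj U [set x in s1] s2 - resid_obj U (e |: [set x in s1]) s2 <=
  c e * (u [set x in s1 ++ s2] - u [set x in s1]).
Proof. by rewrite !resid_obj_cat set0U /= !resid_obj_cat /= setUA set_seq_cat; lra. Qed.

End Objective.

Section LocalOptimum.
Variables (R : realFieldType) (n : nat) (u : {set 'I_n} -> R) (c : 'I_n -> R).
Variables (pi : seq 'I_n) (x0 : 'I_n).
Hypotheses (hpi : is_perm_seq pi) (hloc : local_opt u c pi).
Hypotheses (u_mono : monotone u) (c_ge0 : forall k, 0 <= c k).

Lemma local_opt_gain i j : (j <= i)%N -> (i < n)%N ->
  \sum_(j <= k < i) c (nth x0 pi k) * marg u (nth x0 pi i) (prefix pi k) <=
  c (nth x0 pi i) * (u (prefix pi i) - u (prefix pi j)).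
Proof.
move=> le_ji lt_in; have lt_i : (i < size pi)%N by rewrite size_perm_seq.
set e := nth x0 pi i; set s2 := drop j (take i pi).
have s2E : s2 = take (i - j) (drop j pi) by rewrite take_drop subnK.
have perm_move : is_perm_seq (move_elt i j pi).
  rewrite /is_perm_seq (move_eltE x0) //; apply: perm_trans hpi.
  by rewrite [X in perm_eq _ X](split_at_nth x0 le_ji lt_i) perm_cat2l -cat1s perm_catCA.
have no_gain : mssc_obj u c pi <= mssc_obj u c (move_elt i j pi).
  rewrite leNgt; apply/negP.
  exact: (@hloc (Ordinal lt_in) (Ordinal (leq_ltn_trans le_ji lt_in))).
move: no_gain; rewrite (mssc_obj_resid_obj u c x0 hpi) (mssc_obj_resid_obj u c x0 perm_move).
rewrite (move_eltE x0) // {1}(split_at_nth x0 le_ji lt_i) => /resid_obj_move_front.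
rewrite (resid_obj_setU1 u c x0) -/(prefix pi j) -/e -/s2.
have -> : [set x in take j pi ++ s2] = prefix pi i.
  by rewrite /s2 -{1}(take_takel pi le_ji) cat_take_drop.
apply: le_trans; rewrite -{1}(add0n j) big_addn big_mkord.
have size_s2 : size s2 = (i - j)%N by rewrite s2E size_takel // size_drop leq_sub2r // ltnW.
rewrite size_s2; apply: ler_sum => k _.
by rewrite s2E take_takel 1?ltnW // -prefix_addn nth_take // nth_drop [(j + k)%N]addnC.
Qed.

Lemma local_opt_charge i j : (j <= i)%N -> (i < n)%N ->
  \sum_(j <= k < i.+1) c (nth x0 pi k) * marg u (nth x0 pi i) (prefix pi k) <=
  c (nth x0 pi i) * (u setT - u (prefix pi j)).
Proof.
move=> le_ji lt_in; rewrite big_nat_recr //=.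
have -> : marg u (nth x0 pi i) (prefix pi i) = u (prefix pi i.+1) - u (prefix pi i).
  by rewrite (prefixS x0) // size_perm_seq.
have := local_opt_gain le_ji lt_in.
have := ler_wpM2l (c_ge0 (nth x0 pi i)) (u_mono (subsetT (prefix pi i.+1))).
lra.
Qed.

End LocalOptimum.

Section Charging.
(* Position k of pi has cost ca k and residual ra k, position q of sigma has cost
   cb q and residual rb q, g k q is the marginal value of sigma_q on top of pi_<k,
   and pos q is the position of sigma_q in pi. *)
Variables (R : realFieldType) (N : nat) (ca cb ra rb : nat -> R).
Variables (g : nat -> nat -> R) (pos : nat -> nat).
Hypotheses (ca_ge0 : forall k, 0 <= ca k) (cb_ge0 : forall q, 0 <= cb q).
Hypotheses (rb_ge0 : forall q, 0 <= rb q) (ra_ge0 : forall k, 0 <= ra k).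
Hypothesis rbN : rb N = 0.
Hypothesis ra_noninc : forall k k', (k <= k')%N -> ra k' <= ra k.
Hypothesis ra_cover :
  forall k L, (L <= N)%N -> ra k <= rb L + \sum_(0 <= q < L) g k q.
Hypothesis pos_lt : forall q, (pos q < N)%N.
Hypothesis g_after_pos : forall q k, (pos q < k)%N -> g k q = 0.
Hypothesis g_local : forall q j, (j <= pos q)%N ->
  \sum_(j <= k < (pos q).+1) ca k * g k q <= cb q * ra j.

Lemma exists_threshold k : exists L, 2 * rb L <= ra k.
Proof. by exists N; rewrite rbN mulr0. Qed.

Definition threshold k := ex_minn (exists_threshold k).

Lemma thresholdP k : 2 * rb (threshold k) <= ra k.
Proof. by rewrite /threshold; case: ex_minnP. Qed.

Lemma threshold_min k L : 2 * rb L <= ra k -> (threshold k <= L)%N.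
Proof. by rewrite /threshold; case: ex_minnP => L0 _; apply. Qed.

Lemma threshold_leN k : (threshold k <= N)%N.
Proof. by apply: threshold_min; rewrite rbN mulr0. Qed.

Lemma threshold_mono : {homo threshold : k k' / (k <= k')%N}.
Proof.
move=> k k' le_kk'; apply: threshold_min.
exact: le_trans (thresholdP k') (ra_noninc le_kk').
Qed.

Lemma lt_threshold k q : (q < threshold k)%N -> ra k < 2 * rb q.
Proof.
by move=> lt_qk; rewrite ltNge; apply: contraTN lt_qk => /threshold_min; rewrite -leqNgt.
Qed.

Lemma ra_le_threshold_sum k : ra k <= 2 * \sum_(0 <= q < threshold k) g k q.
Proof. by have := ra_cover k (threshold_leN k); have := thresholdP k; lra. Qed.

Lemma charge_per_element q :
  \sum_(0 <= k < N | (q < threshold k)%N) ca k * g k q <= 2 * (cb q * rb q).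
Proof.
set i := pos q; set P := fun k => (q < threshold k)%N.
have ex_kap : exists k, (i < k)%N || P k by exists i.+1; rewrite ltnSn.
(* kap is the first position charging q, or i.+1 if there is none. *)
have [kap kapP kap_min] := ex_minnP ex_kap.
have kap_le : (kap <= i.+1)%N by apply: kap_min; rewrite ltnSn.
have P_from_kap k : (kap <= k <= i)%N -> P k.
  case/andP=> kap_k k_i; case/orP: kapP => [i_kap | P_kap]; first lia.
  exact: leq_trans P_kap (threshold_mono kap_k).
have -> : \sum_(0 <= k < N | P k) ca k * g k q = \sum_(kap <= k < i.+1) ca k * g k q.
  rewrite (big_cat_nat (leq0n i.+1) (pos_lt q)) /= [X in _ + X]big1_seq ?addr0; last first.
    by move=> k /andP[_]; rewrite mem_index_iota => /andP[/g_after_pos -> _]; rewrite mulr0.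
  rewrite (big_cat_nat (leq0n kap) kap_le) /= big1_seq ?add0r; last first.
    move=> k /andP[Pk]; rewrite mem_index_iota => /andP[_ k_kap].
    by have := kap_min k; rewrite Pk orbT => /(_ isT); rewrite leqNgt k_kap.
  rewrite big_nat_cond [RHS]big_nat_cond; apply: eq_bigl => k.
  by case: (boolP (kap <= k < i.+1)%N) => //= /P_from_kap ->.
have [i_kap|kap_i] := ltnP i kap.
  by rewrite big_geq // !mulr_ge0.
apply: le_trans (g_local kap_i) _; rewrite mulrCA ler_wpM2l //.
by apply/ltW/lt_threshold/P_from_kap; rewrite leqnn.
Qed.

Lemma charging : \sum_(k < N) ca k * ra k <= 4 * \sum_(q < N) cb q * rb q.
Proof.
rewrite -(big_mkord xpredT (fun k => ca k * ra k)) -(big_mkord xpredT (fun q => cb q * rb q)).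
have covered k : ca k * ra k <=
    2 * \sum_(0 <= q < N | (q < threshold k)%N) ca k * g k q.
  apply: le_trans (ler_wpM2l (ca_ge0 k) (ra_le_threshold_sum k)) _.
  by rewrite (big_nat_widen _ _ N) ?threshold_leN // mulrCA -mulr_sumr.
apply: le_trans; first by apply: ler_sum => k _; apply: covered.
rewrite -mulr_sumr (exchange_big_dep_nat xpredT) //=.
have -> : (4 : R) = 2 * 2 by lra.
rewrite -mulrA ler_wpM2l // mulr_sumr; apply: ler_sum => q _.
exact: charge_per_element.
Qed.

End Charging.

Theorem theorem1 (R : realFieldType) (n : nat)
  (u : {set 'I_n} -> R) (c : 'I_n -> R)
  (hu0 : normalized u) (hunn : nonneg_fun u) (humon : monotone u)
  (husub : submodular u) (hu2 : second_order_supermodular u)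
  (hc : forall i, 0 < c i)
  (pi : seq 'I_n) (hpi : is_perm_seq pi) (hloc : local_opt u c pi) :
  forall sigma : seq 'I_n, is_perm_seq sigma ->
    mssc_obj u c pi <= 4 * mssc_obj u c sigma.
Proof.
move=> sigma hsigma; case: (posnP n) => [n0 | /(Ordinal (m := 0)) x0].
  have /size0nil -> : size pi = 0%N by rewrite size_perm_seq.
  have /size0nil -> : size sigma = 0%N by rewrite size_perm_seq.
  by rewrite /mssc_obj !big_ord0 mulr0.
have c_ge0 k : 0 <= c k by apply: ltW.
have index_lt y : (index y pi < n)%N.
  by rewrite -[X in (_ < X)%N](size_perm_seq hpi) index_mem perm_seq_mem.
have resid_ge0 S : 0 <= u setT - u S by rewrite subr_ge0; apply/humon/subsetT.
rewrite !(mssc_obj_residual u c x0) // !size_perm_seq //.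
apply: (charging (ca := fun k => c (nth x0 pi k)) (cb := fun q => c (nth x0 sigma q))
  (ra := fun k => u setT - u (prefix pi k)) (rb := fun q => u setT - u (prefix sigma q))
  (g := fun k q => marg u (nth x0 sigma q) (prefix pi k))
  (pos := fun q => index (nth x0 sigma q) pi)) => /=.
- by move=> k.
- by move=> q.
- by move=> q; apply: resid_ge0.
- by move=> k; apply: resid_ge0.
- by rewrite prefix_full // subrr.
- by move=> k k' le_kk'; apply: lerB => //; apply/humon/prefix_subset.
- move=> k L le_Ln; have := le_sum_marg humon husub (prefix pi k) (take L sigma).
  rewrite (big_nth x0) size_takel ?size_perm_seq //.
  under eq_big_nat => q /andP[_ lt_qL] do rewrite nth_take //.
  rewrite -/(prefix sigma L); lra.
- by move=> q; apply: index_lt.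
- by move=> q k lt_k; apply: marg_in; rewrite inE in_take ?perm_seq_mem.
- move=> q j le_j; have := local_opt_charge x0 hpi hloc humon c_ge0 le_j.
  by rewrite nth_index ?perm_seq_mem //; apply.
Qed.
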